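(* Let $R$ be a commutative ring and $\mathcal{G}$ a Gabriel filter of finite type, and let $\sigma_\mathcal{G}$ and $T_\mathcal{G}=\operatorname{Coker}\sigma_\mathcal{G}$ be as constructed below. Then $T_\mathcal{G}$ is a silting module with respect to $\sigma_\mathcal{G}$, and $\operatorname{Gen}T_\mathcal{G}=\operatorname{Div}\mathcal{G}$.
   Context: A Gabriel filter is a filter $\mathcal{G}$ of ideals such that (i) $I\in\mathcal{G}$, $x\in R$ imply $(I:x)=\{r\mid xr\in I\}\in\mathcal{G}$, and (ii) if $J$ is an ideal and there is $I\in\mathcal{G}$ with $(J:x)\in\mathcal{G}$ for all $x\in I$, then $J\in\mathcal{G}$; it is of finite type if it has a filter basis of finitely generated ideals. $\operatorname{Div}\mathcal{G}=\{M\mid MI=M\ \forall I\in\mathcal{G}\}$. $\operatorname{Gen}T$: epimorphic images of direct sums of copies of $T$. For $\alpha:A\to B$, $\mathcal{D}_\alpha=\{X\mid\operatorname{Hom}_R(\alpha,X)\text{ surjective}\}$; $T$ is silting with respect to $\sigma:P_{-1}\to P_0$ ($P_i$ projective) if $T=\operatorname{Coker}\sigma$ and $\operatorname{Gen}T=\mathcal{D}_\sigma$. Construction: let $\mathcal{I}$ be the set of finitely generated ideals in $\mathcal{G}$, and for each $I\in\mathcal{I}$ fix generators $x^I_0,\dots,x^I_{n_I-1}$. Let $\Lambda$ be the set of all finite sequences of pairs $(I,k)$ with $I\in\mathcal{I}$, $0\le k<n_I$, including the empty sequence $w$; $\sqcup$ denotes concatenation. Let $F$ be free on basis $\Lambda$,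 $F'$ free on basis $\Lambda\setminus\{w\}$, $K$ free on basis $\Lambda\times\mathcal{I}$. Define $\varphi_\mathcal{G}:K\to F$ by $\varphi_\mathcal{G}((\lambda,I))=\lambda-\sum_{k<n_I}x^I_k(\lambda\sqcup(I,k))$, and $\varphi'_\mathcal{G}=p\circ\varphi_\mathcal{G}:K\to F'$ where $p:F\to F'$ is the projection killing the coordinate $w$. Let $\sigma_\mathcal{G}=\varphi_\mathcal{G}\oplus\varphi'_\mathcal{G}:K\oplus K\to F\oplus F'$ and $T_\mathcal{G}=\operatorname{Coker}\sigma_\mathcal{G}=\operatorname{Coker}\varphi_\mathcal{G}\oplus\operatorname{Coker}\varphi'_\mathcal{G}$. *)

(* Modules over a ring are mathcomp [lmodType R]; free modules
   and direct sums (on arbitrary, possibly infinite, index types) are built here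
   as finitely supported functions, with classical eq/choice instances. *)
From HB Require Import structures.
From mathcomp Require Import all_boot all_order all_algebra.
From Stdlib Require Import ClassicalEpsilon FunctionalExtensionality
  PropExtensionality ProofIrrelevance.
From Stdlib Require List.

Set Implicit Arguments.
Unset Strict Implicit.
Unset Printing Implicit Defensive.

Import GRing.Theory.
Local Open Scope ring_scope.

Definition ceq {T : Type} (x y : T) : bool :=
  if excluded_middle_informative (x = y) then true else false.

Lemma ceqP (T : Type) : Equality.axiom (@ceq T).
Proof.
move=> x y; rewrite /ceq; case: excluded_middle_informative => h.
  by constructor. by constructor.
Qed.

Definition cfind {T : Type} (P : pred T) (n : nat) : option T :=
  match excluded_middle_informative (exists x, P x) with
  | left h => Some (proj1_sig (constructive_indefinite_description _ h))
  | right _ => None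
  end.

Lemma cfind_correct T (P : pred T) n x : cfind P n = Some x -> P x.
Proof.
rewrite /cfind; case: excluded_middle_informative => // h [<-].
exact: proj2_sig (constructive_indefinite_description _ h).
Qed.

Lemma cfind_complete T (P : pred T) : (exists x, P x) -> exists n, cfind P n.
Proof.
move=> h; exists 0%N; rewrite /cfind; case: excluded_middle_informative => //.
Qed.

Lemma cfind_ext T (P Q : pred T) : P =1 Q -> cfind P =1 cfind Q.
Proof.
move=> e; have -> : P = Q by apply: functional_extensionality.
by [].
Qed.

(* Finitely supported functions B -> M, for B any type and M an       *)
(* R-module.  fsfun B M is the direct sum of copies of M indexed by B; *)
(* fsfun B R^o is the free R-module on the basis B.                    *)
Section FSFun.
Variables (R : pzRingType) (B : Type) (M : lmodType R).

Definition finsupp (f : B -> M) : Prop :=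
  exists s : seq B, List.NoDup s /\ forall b, f b <> 0 -> List.In b s.

Record fsfun := FSFun { fs_val :> B -> M; fs_supp : finsupp fs_val }.

Lemma fsfun_ext (f g : fsfun) : (forall b, f b = g b) -> f = g.
Proof.
case: f => f hf; case: g => g hg /= e.
have efg : f = g by apply: functional_extensionality.
subst g; f_equal; apply: proof_irrelevance.
Qed.

Lemma nodup_cover (s : seq B) :
  exists s', List.NoDup s' /\ forall b, List.In b s -> List.In b s'.
Proof.
elim: s => [|a s [s' [nd hs']]].
  by exists [::]; split; [constructor|].
case: (classic (List.In a s')) => ha.
  by exists s'; split => // b [<-|]; auto.
exists (a :: s'); split; first by constructor.
by move=> b [<-|hb]; [left|right; auto].
Qed.

Definition fs_zero : fsfun := @FSFun (fun _ => 0)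
  (ex_intro _ [::] (conj (List.NoDup_nil _) (fun b h => h erefl))).

Lemma finsupp_add (f g : fsfun) : finsupp (fun b => f b + g b).
Proof.
move: (fs_supp f) (fs_supp g) => [s1 [_ h1]] [s2 [_ h2]].
have [s' [nd hs']] := nodup_cover (s1 ++ s2).
exists s'; split => // b hb; apply: hs'; apply: List.in_or_app.
case: (classic (f b = 0)) => hf.
  by right; apply: h2 => hg; apply: hb; rewrite hf hg addr0.
by left; apply: h1.
Qed.

Definition fs_add (f g : fsfun) : fsfun := FSFun (finsupp_add f g).

Lemma finsupp_opp (f : fsfun) : finsupp (fun b => - f b).
Proof.
move: (fs_supp f) => [s [nd h]]; exists s; split => // b hb; apply: h => e.
by apply: hb; rewrite e oppr0.
Qed.

Definition fs_opp (f : fsfun) : fsfun := FSFun (finsupp_opp f).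

Lemma finsupp_scale (a : R) (f : fsfun) : finsupp (fun b => a *: f b).
Proof.
move: (fs_supp f) => [s [nd h]]; exists s; split => // b hb; apply: h => e.
by apply: hb; rewrite e scaler0.
Qed.

Definition fs_scale (a : R) (f : fsfun) : fsfun := FSFun (finsupp_scale a f).

HB.instance Definition _ := hasDecEq.Build fsfun (@ceqP fsfun).
HB.instance Definition _ :=
  hasChoice.Build fsfun (@cfind_correct fsfun) (@cfind_complete fsfun)
    (@cfind_ext fsfun).

Lemma fs_addA : associative fs_add.
Proof. by move=> f g h; apply: fsfun_ext => b /=; rewrite addrA. Qed.
Lemma fs_addC : commutative fs_add.
Proof. by move=> f g; apply: fsfun_ext => b /=; rewrite addrC. Qed.
Lemma fs_add0 : left_id fs_zero fs_add.
Proof. by move=> f; apply: fsfun_ext => b /=; rewrite add0r. Qed.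
Lemma fs_addN : left_inverse fs_zero fs_opp fs_add.
Proof. by move=> f; apply: fsfun_ext => b /=; rewrite addNr. Qed.

HB.instance Definition _ := GRing.isZmodule.Build fsfun fs_addA fs_addC fs_add0 fs_addN.

Lemma fs_scaleA a b (f : fsfun) : fs_scale a (fs_scale b f) = fs_scale (a * b) f.
Proof. by apply: fsfun_ext => x /=; rewrite scalerA. Qed.
Lemma fs_scale1 : left_id 1 fs_scale.
Proof. by move=> f; apply: fsfun_ext => x /=; rewrite scale1r. Qed.
Lemma fs_scaleDr : right_distributive fs_scale +%R.
Proof. by move=> a f g; apply: fsfun_ext => x /=; rewrite scalerDr. Qed.
Lemma fs_scaleDl (f : fsfun) : {morph fs_scale^~ f : a b / a + b}.
Proof. by move=> a b; apply: fsfun_ext => x /=; rewrite scalerDl. Qed.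

HB.instance Definition _ :=
  GRing.Zmodule_isLmodule.Build R fsfun fs_scaleA fs_scale1 fs_scaleDr fs_scaleDl.

End FSFun.

Section Free.
Variables (R : pzRingType) (B : Type).

Lemma finsupp_delta (b : B) :
  finsupp (fun b' => (if ceq b b' then 1 else 0) : R^o).
Proof.
exists [:: b]; split; first by constructor; [case|constructor].
by move=> b'; case: ceqP => // <- _; left.
Qed.

Definition delta (b : B) : fsfun B R^o := FSFun (finsupp_delta b).

Definition fs_pick {M : lmodType R} (f : fsfun B M) : seq B :=
  proj1_sig (constructive_indefinite_description _ (fs_supp f)).

Definition fs_lift {N : lmodType R} (g : B -> N) (f : fsfun B R^o) : N :=
  \sum_(b <- fs_pick f) ((f b : R) *: g b).

End Free.
Arguments delta {R B}.
Arguments fs_lift {R B N}.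

Section ModuleNotions.
Variable R : pzRingType.

Definition is_hom {A B : lmodType R} (f : A -> B) : Prop :=
  forall a u v, f (a *: u + v) = a *: f u + f v.

Definition projective (P : lmodType R) : Prop :=
  forall (A B : lmodType R) (p : {linear A -> B}),
    (forall b, exists a, p a = b) ->
    forall f : {linear P -> B}, exists g : {linear P -> A}, forall x, p (g x) = f x.

Definition D_class {A B : lmodType R} (alpha : A -> B) (X : lmodType R) : Prop :=
  forall f : {linear A -> X}, exists g : {linear B -> X}, forall a, f a = g (alpha a).

Definition Gen (T X : lmodType R) : Prop :=
  exists (J : Type) (f : {linear fsfun J T -> X}), forall x, exists y, f y = x.

Definition is_coker {A B T : lmodType R} (alpha : A -> B) (pi : {linear B -> T}) : Prop :=
  (forall t, exists b, pi b = t) /\ (forall b, pi b = 0 <-> exists a, alpha a = b).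

Definition silting_wrt {Pm1 P0 : lmodType R} (sigma : Pm1 -> P0) (T : lmodType R) : Prop :=
  [/\ projective Pm1, projective P0, is_hom sigma,
      (exists pi : {linear P0 -> T}, is_coker sigma pi) &
      forall X : lmodType R, Gen T X <-> D_class sigma X].

End ModuleNotions.

Section Gabriel.
Variable R : comPzRingType.

Definition is_ideal (I : R -> Prop) : Prop :=
  [/\ I 0, (forall x y, I x -> I y -> I (x + y)) & (forall r x, I x -> I (r * x))].

Definition colon (I : R -> Prop) (x : R) : R -> Prop := fun r => I (x * r).

Definition is_filter_of_ideals (G : (R -> Prop) -> Prop) : Prop :=
  [/\ forall I, G I -> is_ideal I,
      G (fun _ => True),
      (forall I J, G I -> is_ideal J -> (forall x, I x -> J x) -> G J) &
      (forall I J, G I -> G J -> G (fun x => I x /\ J x))].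

Definition is_gabriel_filter (G : (R -> Prop) -> Prop) : Prop :=
  [/\ is_filter_of_ideals G,
      (forall I x, G I -> G (colon I x)) &
      (forall J, is_ideal J ->
         (exists I, G I /\ forall x, I x -> G (colon J x)) -> G J)].

Definition ideal_gen (s : seq R) : R -> Prop :=
  fun y => exists c : 'I_(size s) -> R, y = \sum_(i < size s) c i * s`_i.

Definition fin_gen_ideal (I : R -> Prop) : Prop :=
  exists s : seq R, forall y, I y <-> ideal_gen s y.

Definition finite_type (G : (R -> Prop) -> Prop) : Prop :=
  forall I, G I -> exists J, [/\ G J, fin_gen_ideal J & forall x, J x -> I x].

Definition Div (G : (R -> Prop) -> Prop) (M : lmodType R) : Prop :=
  forall I, G I -> forall m : M,
    exists (n : nat) (r : 'I_n -> R) (ms : 'I_n -> M),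
      (forall i, I (r i)) /\ m = \sum_(i < n) r i *: ms i.

Variable G : (R -> Prop) -> Prop.

Definition FGI : Type := {I : R -> Prop | G I /\ fin_gen_ideal I}.

(* chosen generators x^I_0, ..., x^I_{n_I - 1} (n_I = size (gens I)) *)
Variable gens : FGI -> seq R.

Definition Pair : Type := {p : FGI * nat | (p.2 < size (gens p.1))%N}.
(* Lambda: finite sequences of pairs; w = [::]; concatenation l |_| (I,k) = rcons l (I,k) *)
Definition Lam : Type := seq Pair.
Definition Lam' : Type := {l : Lam | l <> [::]}.

Definition Kmod : lmodType R := fsfun (Lam * FGI) R^o.
Definition Fmod : lmodType R := fsfun Lam R^o.
Definition F'mod : lmodType R := fsfun Lam' R^o.

Definition mkpair (I : FGI) (k : 'I_(size (gens I))) : Pair :=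
  exist (fun p : FGI * nat => (p.2 < size (gens p.1))%N) (I, nat_of_ord k) (ltn_ord k).

Definition phi_basis (lI : Lam * FGI) : Fmod :=
  delta lI.1 - \sum_(k < size (gens lI.2)) (gens lI.2)`_k *: delta (rcons lI.1 (mkpair k)).

Definition phiG (c : Kmod) : Fmod := fs_lift phi_basis c.

Lemma cons_nnil (a : Pair) (l : Lam) : a :: l <> [::].
Proof. by []. Qed.

Definition proj_basis (l : Lam) : F'mod :=
  match l with
  | [::] => 0
  | a :: l' => delta (exist (fun l0 : Lam => l0 <> [::]) (a :: l') (@cons_nnil a l'))
  end.

Definition projF (f : Fmod) : F'mod := fs_lift proj_basis f.

Definition phi'G (c : Kmod) : F'mod := projF (phiG c).

Definition sigmaG (c : Kmod * Kmod) : Fmod * F'mod := (phiG c.1, phi'G c.2).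

End Gabriel.

(* Write I M for the submodule of finite sums of r *: m with r in I.  As G is of
   finite type, M lies in Div G as soon as M = J M for every finitely generated
   J in G, and such modules are closed under sums and epimorphic images.

   The relations phi (l, J) = l - \sum_k x^J_k (l ++ (J, k)) make every basis
   vector of F, and of F', a J-combination modulo the image of sigma, so
   T = J T and Gen T is contained in Div G.  Conversely, if X = J X for all
   such J, values prescribed along the relations can be propagated down the
   tree of words: having chosen y l, write y l - M l J as
   \sum_k x^J_k y (l ++ (J, k)).  Each word has a unique parent, so the choices
   never conflict.  This extends any map K -> X through phi and phi' (X is in
   D_sigma), and with M = 0 and y w = m it gives a map T -> X hitting m (X is
   in Gen T).  Finally, a map K + K -> X concentrated at (w, J) in the second
   summand extends along sigma only if its value is a J-combination, since p
   kills w; so D_sigma is contained in Div G. *)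

From Pilot Require Import Defs.
From HB Require Import structures.
From mathcomp Require Import all_boot all_order all_algebra.
From Stdlib Require Import ClassicalEpsilon ProofIrrelevance.
From Stdlib Require List.

Set Implicit Arguments.
Unset Strict Implicit.
Unset Printing Implicit Defensive.

Import GRing.Theory.
Local Open Scope ring_scope.

(* [B] with the classical equality of [Defs], so that [seq] membership and
   [uniq] can be used for lists of elements of an arbitrary index type. *)
Definition ctype (B : Type) : Type := B.
HB.instance Definition _ (B : Type) := hasDecEq.Build (ctype B) (@ceqP B).

Lemma In_mem (B : Type) (s : seq (ctype B)) x : List.In x s <-> x \in s.
Proof.
elim: s => [|a s IH] //=; rewrite in_cons; split.
  by case=> [->|/IH ->]; rewrite ?eqxx ?orbT.
by case/orP=> [/eqP ->|/IH]; [left|right].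
Qed.

Lemma NoDup_uniq (B : Type) (s : seq (ctype B)) : List.NoDup s -> uniq s.
Proof.
elim: s => [|a s IH] //= h; inversion h; subst.
by rewrite IH // andbT; apply/negP => /In_mem.
Qed.

Section Homomorphisms.
Variable R : pzRingType.
Implicit Types A B C : lmodType R.

Section Pack.
Variables (A B : lmodType R) (f : A -> B) (hf : is_hom f).
Definition mklin_fun (_ : is_hom f) : A -> B := f.
HB.instance Definition _ := GRing.isLinear.Build R A B *:%R (mklin_fun hf) hf.
Definition mklin : {linear A -> B} := mklin_fun hf.
Lemma mklinE x : mklin x = f x. Proof. by []. Qed.
End Pack.

Lemma linear_is_hom A B (f : {linear A -> B}) : is_hom f.
Proof. by move=> a u v; rewrite linearP. Qed.

Lemma hom0 A B (f : A -> B) : is_hom f -> f 0 = 0.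
Proof. by move=> hf; rewrite -(mklinE hf) linear0. Qed.

Lemma homZ A B (f : A -> B) a u : is_hom f -> f (a *: u) = a *: f u.
Proof. by move=> hf; rewrite -!(mklinE hf) linearZ. Qed.

Lemma homD A B (f : A -> B) u v : is_hom f -> f (u + v) = f u + f v.
Proof. by move=> hf; rewrite -!(mklinE hf) linearD. Qed.

Lemma hom_comp A B C (f : A -> B) (g : B -> C) :
  is_hom f -> is_hom g -> is_hom (fun x => g (f x)).
Proof. by move=> hf hg a u v; rewrite hf hg. Qed.

Lemma hom_add A C (f g : A -> C) :
  is_hom f -> is_hom g -> is_hom (fun x => f x + g x).
Proof. by move=> hf hg a u v; rewrite hf hg scalerDr addrACA. Qed.

Lemma hom_zero A C : is_hom (fun _ : A => (0 : C)).
Proof. by move=> a u v; rewrite scaler0 addr0. Qed.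

Lemma hom_fst A B : is_hom (fun x : A * B => x.1). Proof. by []. Qed.
Lemma hom_snd A B : is_hom (fun x : A * B => x.2). Proof. by []. Qed.

Lemma hom_inl A B : is_hom (fun x : A => (x, 0 : B)).
Proof. by move=> a u v; congr pair; rewrite /= scaler0 addr0. Qed.

Lemma hom_inr A B : is_hom (fun x : B => (0 : A, x)).
Proof. by move=> a u v; congr pair; rewrite /= scaler0 addr0. Qed.

Lemma hom_pair_split A B C (f : A * B -> C) x :
  is_hom f -> f x = f (x.1, 0) + f (0, x.2).
Proof.
move=> hf; rewrite -homD //; congr f.
by case: x => x1 x2; congr pair; rewrite /= ?addr0 ?add0r.
Qed.

End Homomorphisms.

Section FiniteSupport.
Variables (R : pzRingType) (B : Type) (M N : lmodType R).

Lemma fs_pickP (f : fsfun B M) :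
  uniq (fs_pick f : seq (ctype B)) /\
  forall b, f b != 0 -> (b : ctype B) \in (fs_pick f : seq (ctype B)).
Proof.
rewrite /fs_pick; case: constructive_indefinite_description => s [nd h] /=.
split; first exact: NoDup_uniq.
by move=> b /eqP hb; apply/In_mem; apply: h.
Qed.

Definition fsum (H : B -> M -> N) (f : fsfun B M) : N :=
  \sum_(b <- fs_pick f) H b (f b).

Lemma fsumE (H : B -> M -> N) (f : fsfun B M) (s : seq (ctype B)) :
  (forall b, H b 0 = 0) -> uniq s -> (forall b : ctype B, f b != 0 -> b \in s) ->
  fsum H f = \sum_(b <- s) H b (f b).
Proof.
move=> H0 us hs; have [up hp] := fs_pickP f.
have supp (s' : seq (ctype B)) : \sum_(b <- s') H b (f b) = \sum_(b <- s' | f b != 0) H b (f b).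
  by rewrite [RHS]big_mkcond; apply: eq_bigr => b _; case: eqP => // ->; rewrite H0.
rewrite /fsum (supp (fs_pick f)) (supp s) -big_filter -[RHS]big_filter; apply: perm_big.
apply: uniq_perm; rewrite ?filter_uniq // => b; rewrite !mem_filter.
by case hb: (f b != 0) => //=; rewrite hp ?hs.
Qed.

Lemma fsum_hom (H : B -> M -> N) : (forall b, is_hom (H b)) -> is_hom (fsum H).
Proof.
move=> hH a u v; have H0 b : H b 0 = 0 by apply: hom0.
pose s : seq (ctype B) :=
  undup ((fs_pick u : seq (ctype B)) ++ fs_pick v ++ fs_pick (a *: u + v)).
have us : uniq s by apply: undup_uniq.
have [_ pu] := fs_pickP u; have [_ pv] := fs_pickP v.
have [_ pw] := fs_pickP (a *: u + v).
rewrite (@fsumE _ _ s H0 us); last by move=> b /pw hb; rewrite mem_undup !mem_cat hb !orbT.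
rewrite (@fsumE _ u s H0 us); last by move=> b /pu hb; rewrite mem_undup !mem_cat hb.
rewrite (@fsumE _ v s H0 us); last by move=> b /pv hb; rewrite mem_undup !mem_cat hb !orbT.
by rewrite scaler_sumr -big_split; apply: eq_bigr => b _; rewrite /= hH.
Qed.

Lemma finsupp_single (b : B) (m : M) : finsupp (fun b' => if ceq b b' then m else 0).
Proof.
exists [:: b]; split; first by constructor; [case|constructor].
by move=> b'; case: ceqP => // <- _; left.
Qed.

Definition single (b : B) (m : M) : fsfun B M := FSFun (finsupp_single b m).

Lemma hom_single b : is_hom (single b).
Proof. by move=> a u v; apply: fsfun_ext => c /=; case: ceq; rewrite ?scaler0 ?addr0. Qed.

Lemma fsum_single (H : B -> M -> N) b m :
  (forall b, H b 0 = 0) -> fsum H (single b m) = H b m.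
Proof.
move=> H0; rewrite (@fsumE _ _ [:: (b : ctype B)]) //.
  by rewrite big_seq1 /=; case: ceqP.
by move=> b' /=; case: ceqP => [<-|]; rewrite ?mem_seq1 eqxx.
Qed.

Lemma fsfun_sumE (I : Type) (s : seq I) (F : I -> fsfun B M) b :
  (\sum_(i <- s) F i) b = \sum_(i <- s) F i b.
Proof. by elim: s => [|a s IH]; rewrite ?big_nil ?big_cons //= -IH. Qed.

Lemma fsfun_singleE (f : fsfun B M) : f = \sum_(b <- fs_pick f) single b (f b).
Proof.
apply: fsfun_ext => b'; rewrite fsfun_sumE /=.
have [up hp] := fs_pickP f.
have -> : \sum_(b <- fs_pick f) (if ceq b b' then f b else 0)
   = \sum_(b <- (fs_pick f : seq (ctype B)) | b == (b' : ctype B)) f b.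
  by rewrite [RHS]big_mkcond; apply: eq_bigr.
case hb: ((b' : ctype B) \in (fs_pick f : seq (ctype B))).
  by rewrite -big_filter (filter_pred1_uniq up hb) big_seq1.
rewrite big1_seq; last by move=> b /andP [/eqP -> h]; rewrite h in hb.
by apply/eqP; apply: contraFT hb => /hp.
Qed.

Lemma hom_fsum (h : fsfun B M -> N) (f : fsfun B M) :
  is_hom h -> h f = fsum (fun b m => h (single b m)) f.
Proof. by move=> hh; rewrite {1}(fsfun_singleE f) -(mklinE hh) raddf_sum. Qed.

End FiniteSupport.

Section FreeModules.
Variables (R : pzRingType) (B : Type).

Lemma single_scale (b : B) (r : R) : single b (r : R^o) = r *: delta b.
Proof.
apply: fsfun_ext => c /=.
by case: ceqP => _; [exact: (esym (mulr1 r)) | rewrite scaler0].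
Qed.

Lemma fs_lift_hom (N : lmodType R) (g : B -> N) : is_hom (fs_lift g).
Proof.
have h : is_hom (fsum (fun b (r : R^o) => (r : R) *: g b)).
  by apply: fsum_hom => b a u v; rewrite scalerDl scalerA.
exact: h.
Qed.

Lemma fs_lift_delta (N : lmodType R) (g : B -> N) b : fs_lift g (delta b) = g b.
Proof.
have -> : delta b = single b (1 : R^o) by apply: fsfun_ext.
rewrite /fs_lift -/(fsum (fun b (r : R^o) => (r : R) *: g b) _).
by rewrite fsum_single ?scale1r // => b'; rewrite scale0r.
Qed.

Lemma hom_fs_lift (N : lmodType R) (h : fsfun B R^o -> N) f :
  is_hom h -> h f = fs_lift (fun b => h (delta b)) f.
Proof.
move=> hh; rewrite (hom_fsum f hh) /fsum /fs_lift; apply: eq_bigr => b _.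
by rewrite single_scale homZ.
Qed.

Lemma free_hom_ext (N : lmodType R) (h1 h2 : fsfun B R^o -> N) f :
  is_hom h1 -> is_hom h2 -> (forall b, h1 (delta b) = h2 (delta b)) -> h1 f = h2 f.
Proof.
move=> hh1 hh2 e; rewrite (hom_fs_lift _ hh1) (hom_fs_lift _ hh2).
by apply: eq_bigr => b _; rewrite e.
Qed.

Lemma free_projective : projective (fsfun B R^o).
Proof.
move=> A C p hp f.
pose a b := proj1_sig (constructive_indefinite_description _ (hp (f (delta b)))).
have ha b : p (a b) = f (delta b).
  by rewrite /a; case: constructive_indefinite_description.
exists (mklin (fs_lift_hom a)) => x.
apply: (@free_hom_ext C (fun x => p (mklin (fs_lift_hom a) x)) f).
- by move=> r u v; rewrite !linearP.
- exact: linear_is_hom.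
- by move=> b; rewrite mklinE fs_lift_delta.
Qed.

End FreeModules.

Lemma prod_projective (R : pzRingType) (P1 P2 : lmodType R) :
  projective P1 -> projective P2 -> projective (P1 * P2)%type.
Proof.
move=> h1 h2 A C p hp f.
have [g1 e1] := h1 A C p hp (mklin (hom_comp (@hom_inl _ _ _) (linear_is_hom f))).
have [g2 e2] := h2 A C p hp (mklin (hom_comp (@hom_inr _ _ _) (linear_is_hom f))).
have hg : is_hom (fun x : P1 * P2 => g1 x.1 + g2 x.2).
  exact: hom_add (hom_comp (@hom_fst _ _ _) (linear_is_hom g1))
                 (hom_comp (@hom_snd _ _ _) (linear_is_hom g2)).
exists (mklin hg) => x.
by rewrite mklinE linearD e1 e2 !mklinE -(hom_pair_split x (linear_is_hom f)).
Qed.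

Section IdealMultiples.
Variable R : comPzRingType.
Implicit Types (I J : R -> Prop) (M N : lmodType R).

(* [Div G M] unfolds to [forall I, G I -> forall m, in_IM I m]. *)
Definition in_IM I M (m : M) : Prop :=
  exists (n : nat) (r : 'I_n -> R) (ms : 'I_n -> M),
    (forall i, I (r i)) /\ m = \sum_(i < n) r i *: ms i.

Lemma in_IM0 I M : in_IM I (0 : M).
Proof. by exists 0%N, (fun _ => 0), (fun _ => 0); split; [case|rewrite big_ord0]. Qed.

Lemma in_IMD I M (m1 m2 : M) : in_IM I m1 -> in_IM I m2 -> in_IM I (m1 + m2).
Proof.
move=> [n1 [r1 [ms1 [h1 ->]]]] [n2 [r2 [ms2 [h2 ->]]]].
exists (n1 + n2)%N, (fun i => match split i with inl j => r1 j | inr j => r2 j end),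
  (fun i => match split i with inl j => ms1 j | inr j => ms2 j end); split.
  by move=> i; case: split.
rewrite big_split_ord; congr (_ + _); apply: eq_bigr => i _.
  by have -> : split (lshift n2 i) = inl i := unsplitK (inl i).
by have -> : split (rshift n1 i) = inr i := unsplitK (inr i).
Qed.

Lemma in_IM_scale I M r (m : M) : I r -> in_IM I (r *: m).
Proof. by move=> h; exists 1%N, (fun _ => r), (fun _ => m); split => //; rewrite big_ord1. Qed.

Lemma in_IM_sum I M (T : Type) (s : seq T) (F : T -> M) :
  (forall t, in_IM I (F t)) -> in_IM I (\sum_(t <- s) F t).
Proof.
move=> h; elim: s => [|a s IH]; first by rewrite big_nil; apply: in_IM0.
by rewrite big_cons; apply: in_IMD.
Qed.

Lemma in_IM_hom I M N (h : M -> N) m : is_hom h -> in_IM I m -> in_IM I (h m).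
Proof.
move=> hh [n [r [ms [hr ->]]]]; exists n, r, (fun i => h (ms i)); split => //.
by rewrite -(mklinE hh) raddf_sum; apply: eq_bigr => i _; exact: homZ.
Qed.

Lemma in_IMZ I M a (m : M) : in_IM I m -> in_IM I (a *: m).
Proof.
by apply: in_IM_hom => b u v; rewrite scalerDr !scalerA mulrC.
Qed.

Lemma in_IM_sub I J M (m : M) : (forall x, J x -> I x) -> in_IM J m -> in_IM I m.
Proof. by move=> hJI [n [r [ms [hr e]]]]; exists n, r, ms; split => // i; apply: hJI. Qed.

Lemma Div_Gen (G : (R -> Prop) -> Prop) (T X : lmodType R) :
  Div G T -> Gen T X -> Div G X.
Proof.
move=> hT [J [f hf]] I GI m; have [y <-] := hf m.
rewrite (hom_fsum y (linear_is_hom f)) /fsum; apply: in_IM_sum => j.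
apply: (in_IM_hom (h := fun t => f (single j t))); last exact: hT.
exact: hom_comp (@hom_single _ _ T j) (linear_is_hom f).
Qed.

End IdealMultiples.

Lemma coker_lift (R : pzRingType) (A B T N : lmodType R) (alpha : A -> B)
    (pi : {linear B -> T}) (k : B -> N) :
  is_coker alpha pi -> is_hom k -> (forall a, k (alpha a) = 0) ->
  exists h : T -> N, is_hom h /\ forall b, h (pi b) = k b.
Proof.
move=> [pi_surj pi_ker] hk k_alpha.
pose pre t := sval (constructive_indefinite_description _ (pi_surj t)).
have preP t : pi (pre t) = t.
  by rewrite /pre; case: constructive_indefinite_description.
have k_resp b1 b2 : pi b1 = pi b2 -> k b1 = k b2.
  move=> e; have /pi_ker [a ea] : pi (b1 - b2) = 0 by rewrite linearB e subrr.
  by apply/eqP; rewrite -subr_eq0 -!(mklinE hk) -linearB mklinE -ea k_alpha.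
exists (fun t => k (pre t)); split; last by move=> b; apply: k_resp; rewrite preP.
by move=> a u v; rewrite -hk; apply: k_resp; rewrite linearP !preP.
Qed.

Section Construction.
Variables (R : comPzRingType) (G : (R -> Prop) -> Prop) (gens : FGI G -> seq R).
Hypothesis hgens : forall (I : FGI G) (y : R), sval I y <-> ideal_gen (gens I) y.

Lemma gens_mem (I : FGI G) (k : 'I_(size (gens I))) : sval I (gens I)`_k.
Proof.
apply/hgens; exists (fun i => if i == k then 1 else 0).
rewrite (bigD1 k) //= eqxx mul1r big1 ?addr0 // => i /negPf ->; by rewrite mul0r.
Qed.

Lemma in_IM_gens_sum (I : FGI G) (M : lmodType R) (ys : 'I_(size (gens I)) -> M) :
  in_IM (sval I) (\sum_(k < size (gens I)) (gens I)`_k *: ys k).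
Proof. by apply: in_IM_sum => k; apply/in_IM_scale/gens_mem. Qed.

Lemma in_IM_gensP (I : FGI G) (M : lmodType R) (m : M) : in_IM (sval I) m ->
  exists ys : 'I_(size (gens I)) -> M, m = \sum_(k < size (gens I)) (gens I)`_k *: ys k.
Proof.
move=> [n [r [ms [hr ->]]]].
pose c i := sval (constructive_indefinite_description _ (proj1 (hgens I (r i)) (hr i))).
have hc i : r i = \sum_(k < size (gens I)) c i k * (gens I)`_k.
  by rewrite /c; case: constructive_indefinite_description.
exists (fun k => \sum_(i < n) c i k *: ms i).
under eq_bigr => i _ do rewrite hc scaler_suml.
rewrite exchange_big /=; apply: eq_bigr => k _.
by rewrite scaler_sumr; apply: eq_bigr => i _; rewrite scalerA mulrC.
Qed.

Lemma Div_FGI (X : lmodType R) : finite_type G ->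
  (forall (J : FGI G) (m : X), in_IM (sval J) m) -> Div G X.
Proof.
move=> hfin hX I GI m; have [J [GJ fgJ JI]] := hfin I GI.
exact: in_IM_sub JI (hX (exist _ J (conj GJ fgJ)) m).
Qed.

Lemma phiG_hom : is_hom (@phiG R G gens).
Proof. exact: fs_lift_hom. Qed.

Lemma projF_hom : is_hom (@projF R G gens).
Proof. exact: fs_lift_hom. Qed.

Lemma sigmaG_hom : is_hom (@sigmaG R G gens).
Proof.
move=> a u v; congr pair; first exact: phiG_hom.
exact: (hom_comp phiG_hom projF_hom).
Qed.

Lemma phiG_delta lI : phiG (delta lI : Kmod gens) = phi_basis lI.
Proof. exact: fs_lift_delta. Qed.

Lemma projF_delta l : projF (delta l : Fmod gens) = proj_basis l.
Proof. exact: fs_lift_delta. Qed.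

Lemma projF_delta_val (l : Lam' gens) : projF (delta (sval l) : Fmod gens) = delta l.
Proof.
rewrite projF_delta; case: l => [[|p l] hl] //=.
by rewrite (proof_irrelevance _ (@cons_nnil _ _ gens p l) hl).
Qed.

Lemma hom_phi_basis (N : lmodType R) (h : Fmod gens -> N) l (I : FGI G) : is_hom h ->
  h (phi_basis (l, I)) =
  h (delta l) - \sum_(k < size (gens I)) (gens I)`_k *: h (delta (rcons l (mkpair k))).
Proof.
move=> hh; rewrite -(mklinE hh) /phi_basis linearB raddf_sum; congr (_ - _).
by apply: eq_bigr => k _; exact: homZ.
Qed.

Lemma fs_lift_projF (N : lmodType R) (y : Lam gens -> N) (x : Fmod gens) :
  y [::] = 0 -> fs_lift (fun l : Lam' gens => y (sval l)) (projF x) = fs_lift y x.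
Proof.
move=> y_nil.
apply: (@free_hom_ext _ _ N (fun x => fs_lift _ (projF x)) (fs_lift y)).
- exact: hom_comp projF_hom (fs_lift_hom _).
- exact: fs_lift_hom.
move=> l; rewrite projF_delta fs_lift_delta.
by case: l => [|p l] /=; rewrite ?fs_lift_delta // (hom0 (fs_lift_hom _)).
Qed.

Lemma in_IM_phi_relation (N : lmodType R) (h : Fmod gens -> N) (J : FGI G) :
  is_hom h -> (forall l, h (phi_basis (l, J)) = 0) ->
  forall l, in_IM (sval J) (h (delta l)).
Proof.
move=> hh h0 l; have := h0 l; rewrite hom_phi_basis // => /eqP.
by rewrite subr_eq0 => /eqP ->; apply: in_IM_gens_sum.
Qed.

Section TreeSolution.
Variables (X : lmodType R) (hX : Div G X) (M : Lam gens -> FGI G -> X) (y0 : X).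

Definition gens_coef (I : FGI G) (m : X) : 'I_(size (gens I)) -> X :=
  sval (constructive_indefinite_description _
          (in_IM_gensP (hX (proj1 (svalP I)) m))).
Arguments gens_coef : clear implicits.

Lemma gens_coefP I m : m = \sum_(k < size (gens I)) (gens I)`_k *: gens_coef I m k.
Proof. by rewrite /gens_coef; case: constructive_indefinite_description. Qed.

(* Words are read from the end: the value at [l ++ [:: (I, k)]] is the k-th
   coefficient of [y l - M l I] over the generators of I. *)
Fixpoint tree_sol_rev (l : seq (Pair gens)) : X :=
  match l with
  | [::] => y0
  | p :: l' => gens_coef (sval p).1 (tree_sol_rev l' - M (rev l') (sval p).1)
                         (Ordinal (svalP p))
  end.

Definition tree_sol (l : Lam gens) : X := tree_sol_rev (rev l).

Lemma tree_solE l I :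
  tree_sol l - \sum_(k < size (gens I)) (gens I)`_k *: tree_sol (rcons l (mkpair k))
  = M l I.
Proof.
have sol_rcons k : tree_sol (rcons l (mkpair k)) = gens_coef I (tree_sol l - M l I) k.
  by rewrite /tree_sol rev_rcons /= revK; congr (gens_coef _ _); apply: val_inj.
under eq_bigr => k _ do rewrite sol_rcons.
by rewrite -gens_coefP opprB addrC subrK.
Qed.

End TreeSolution.

Lemma phiG_extend (X : lmodType R) (hX : Div G X) (f : Kmod gens -> X) (y0 : X) :
  is_hom f -> exists y : Lam gens -> X, y [::] = y0 /\ forall c, f c = fs_lift y (phiG c).
Proof.
move=> hf; exists (tree_sol hX (fun l I => f (delta (l, I))) y0); split => // c.
pose y := tree_sol hX (fun l I => f (delta (l, I))) y0.
apply: (@free_hom_ext _ _ X f (fun c => fs_lift y (phiG c))) => //.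
  exact: hom_comp phiG_hom (fs_lift_hom _).
case=> l I; rewrite phiG_delta (hom_phi_basis _ _ (fs_lift_hom _)) fs_lift_delta.
by under eq_bigr => k _ do rewrite fs_lift_delta; rewrite tree_solE.
Qed.

Lemma D_class_of_Div (X : lmodType R) : Div G X -> D_class (@sigmaG R G gens) X.
Proof.
move=> hX f.
have [y1 [_ e1]] := phiG_extend hX 0 (hom_comp (@hom_inl _ _ _) (linear_is_hom f)).
have [y2 [y2_nil e2]] := phiG_extend hX 0 (hom_comp (@hom_inr _ _ _) (linear_is_hom f)).
pose g (b : Fmod gens * F'mod gens) :=
  fs_lift y1 b.1 + fs_lift (fun l : Lam' gens => y2 (sval l)) b.2.
have hg : is_hom g.
  exact: hom_add (hom_comp (@hom_fst _ _ _) (fs_lift_hom _))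
                 (hom_comp (@hom_snd _ _ _) (fs_lift_hom _)).
exists (mklin hg) => a; rewrite mklinE /g /= fs_lift_projF //.
by rewrite (hom_pair_split a (linear_is_hom f)) e1 e2.
Qed.

Lemma Div_of_D_class (X : lmodType R) :
  finite_type G -> D_class (@sigmaG R G gens) X -> Div G X.
Proof.
move=> hfin hD; apply: Div_FGI => // J m.
pose v (lI : Lam gens * FGI G) : X := if ceq lI ([::], J) then m else 0.
have [g hg] := hD (mklin (hom_comp (@hom_snd _ _ _) (fs_lift_hom v))).
have hgF : is_hom (fun x : Fmod gens => g (0, projF x)).
  exact: hom_comp projF_hom (hom_comp (@hom_inr _ _ _) (linear_is_hom g)).
(* p kills w, so [g] sends sigma (0, (w, J)) to [- \sum_k x^J_k *: g (0, (J, k))]. *)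
have := hg (0, delta ([::], J)).
rewrite mklinE /= fs_lift_delta /v; case: ceqP => // _.
rewrite /sigmaG /phi'G /= (hom0 phiG_hom) phiG_delta (hom_phi_basis _ _ hgF).
rewrite projF_delta /= (hom0 (linear_is_hom g)) sub0r => ->.
rewrite -sumrN; under eq_bigr => k _ do rewrite -scalerN.
exact: in_IM_gens_sum.
Qed.

Section Cokernel.
Variables (T : lmodType R) (pi : {linear (Fmod gens * F'mod gens)%type -> T}).
Hypothesis hpi : is_coker (@sigmaG R G gens) pi.

Lemma Div_coker : finite_type G -> Div G T.
Proof.
move=> hfin; apply: Div_FGI => // J t.
have pi_sigma a : pi (sigmaG a) = 0 by apply/(proj2 hpi); exists a.
have h1 : is_hom (fun x : Fmod gens => pi (x, 0)).
  exact: hom_comp (@hom_inl _ _ _) (linear_is_hom pi).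
have h2 : is_hom (fun x : F'mod gens => pi (0, x)).
  exact: hom_comp (@hom_inr _ _ _) (linear_is_hom pi).
have [b <-] := proj1 hpi t.
rewrite (hom_pair_split b (linear_is_hom pi)); apply: in_IMD.
  rewrite (hom_fs_lift _ h1) /fs_lift; apply: in_IM_sum => l; apply: in_IMZ.
  apply: (in_IM_phi_relation h1) => l'; have := pi_sigma (delta (l', J), 0).
  by rewrite /sigmaG /phi'G /= (hom0 phiG_hom) (hom0 projF_hom) phiG_delta.
rewrite (hom_fs_lift _ h2) /fs_lift; apply: in_IM_sum => l; apply: in_IMZ.
rewrite -projF_delta_val; apply: (in_IM_phi_relation (hom_comp projF_hom h2)) => l'.
have := pi_sigma (0, delta (l', J)).
by rewrite /sigmaG /phi'G /= (hom0 phiG_hom) phiG_delta.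
Qed.

Lemma Gen_of_Div (X : lmodType R) : Div G X -> Gen T X.
Proof.
move=> hX.
have lift (m : X) : exists h : T -> X, is_hom h /\ h (pi (delta [::], 0)) = m.
  have [y [y_nil y_phi]] := phiG_extend hX m (@hom_zero _ (Kmod gens) X).
  have [h [hh h_pi]] := coker_lift hpi (hom_comp (@hom_fst _ _ _) (fs_lift_hom y))
    (fun a => esym (y_phi a.1)).
  by exists h; split => //; rewrite h_pi fs_lift_delta.
pose h m := sval (constructive_indefinite_description _ (lift m)).
have [hh h_w] : (forall m, is_hom (h m)) /\ (forall m, h m (pi (delta [::], 0)) = m).
  by split=> m; rewrite /h; case: constructive_indefinite_description => ? [].
have hsum : is_hom (fsum h) by apply: fsum_hom.
exists X, (mklin hsum) => m; exists (single m (pi (delta [::], 0))).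
by rewrite mklinE fsum_single ?h_w // => m'; apply: hom0.
Qed.

End Cokernel.
End Construction.

Theorem proposition4p6 (R : comPzRingType) (G : (R -> Prop) -> Prop)
  (hG : is_gabriel_filter G) (hfin : finite_type G)
  (gens : FGI G -> seq R)
  (hgens : forall (I : FGI G) (y : R), proj1_sig I y <-> ideal_gen (gens I) y)
  (T : lmodType R) (pi : {linear (Fmod gens * F'mod gens)%type -> T})
  (hpi : is_coker (@sigmaG R G gens) pi) :
  silting_wrt (@sigmaG R G gens) T /\ (forall X : lmodType R, Gen T X <-> Div G X).
Proof.
have Gen_Div X : Gen T X <-> Div G X.
  split; first exact: Div_Gen (Div_coker hgens hpi hfin).
  exact: (Gen_of_Div hgens hpi).
have free2 := prod_projective (@free_projective R _) (@free_projective R _).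
split => //; split; [exact: free2 | exact: free2 | exact: sigmaG_hom | by exists pi |].
move=> X; rewrite Gen_Div; split; first exact: D_class_of_Div.
exact: Div_of_D_class.
Qed.
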